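(* Let $F$ be the fork and let $K,K'$ be proper pseudohexes such that $K$ is obtained from $K'$ by $F$-addition. If every $F$-no-edge of $K$ has both of its endpoints in $V(F_K)$, then $F_K$ can be safely reduced.
   Context: Pseudohex. A pseudohex is a bipartite graph $K$ (parallel edges allowed, no loops) whose edges are coloured blue, red and white, which is either empty or satisfies: (i) the blue edges form vertex-disjoint 6-cycles covering $V(K)$, called the hexagons of $K$; if a hexagon is the 6-cycle $v_0v_1\cdots v_5v_0$ we write $\bar{v_i}=v_{i+3}$ (indices mod 6); (ii) for each vertex $x$, $\{x,\bar x\}$ is a red edge of $K$ (further red edges may exist); (iii) the white edges form a perfect matching of $K$. A white edge $e=\{x,y\}$ is real if $\bar e=\{\bar x,\bar y\}$ is also a white edge and the only red edges sharing a vertex with $e$ or $\bar e$ are $\{x,\bar x\}$ and $\{y,\bar y\}$; non-real white edges are derived. An end is a red edge parallel to a white edge. $G^K$ is the graph whose vertices are the hexagons of $K$, two hexagons being adjacent iff some pair of real white edges $e,\bar e$ joins them. $K$ is proper if it has no end and $G^K$ is 2-connected with no cycle of length 2. Reduction. Let $h$ be a hexagon and $N$ one of the two perfect matchings of its blue 6-cycle. For each edge of $N$, let $P$ be the path formed by that edge and the two white edges adjacent to it. If $P$ is not a cycle of length 2, add a new white edge $e_P$ joining the end vertices of $P$, and for each red edge $\{u,w\}$ with $w$ an interior vertex of $P$ add a red edge $\{u,w'\}$ where $w'$ is the endpoint of $e_P$ in the same bipartition class as $w$. If $P$ is a cycle of length 2, then for each red edge $\{u,w\}$ with $w$ an interior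 vertex of $P$ add a red edge $\{u,\bar u\}$. Finally delete the vertices of $h$. Reducing hexagons $h_1,\dots,h_l$ by perfect matchings $N_1,\dots,N_l$ means performing these reductions successively; its contracted paths are the components (paths and cycles) of the subgraph of $K$ formed by $N_1\cup\dots\cup N_l$ together with all white edges having an endpoint in $V(h_1)\cup\dots\cup V(h_l)$. The reduction is safe if every contracted path/cycle contains at most one derived white edge of $K$; a set of hexagons can be safely reduced if some choice of perfect matchings gives a safe reduction. Fork and addition. The fork $F$ is the tree with vertices $x,y,z,a,b$ and edges $zx,zy,za,ab$; the bold fork has one half-edge at each of $x,y,b$. A graph is obtained from $G'$ by addition of the bold fork if it is obtained from the disjoint union of $G'$ and $F$ by joining each of the three half-edges to a distinct vertex of degree 2 of $G'$. $K$ is obtained from $K'$ by $F$-addition if $G^K$ is obtained from $G^{K'}$ by addition of the bold fork; $F_K$ is the set of hexagons of $K$ corresponding to the vertices of $F$ and $V(F_K)$ the set of their vertices. $F$-no-edges are the derived white edges of $K$ with at least one endpoint in $V(F_K)$. *)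

From mathcomp Require Import all_boot.
Set Implicit Arguments.
Unset Strict Implicit.
Unset Printing Implicit Defensive.

Inductive colour := Blue | Red | White.
Definition is_blue (c : colour) := if c is Blue then true else false.
Definition is_red (c : colour) := if c is Red then true else false.
Definition is_white (c : colour) := if c is White then true else false.

(* A coloured multigraph (parallel edges allowed: edges are elements of a
   finite type with an endpoint map), together with a bipartition [pside]
   and a map [prot] orienting the blue hexagons (v_i |-> v_{i+1}). *)
Record phex := Phex {
  pV : finType;
  pE : finType;
  pends : pE -> pV * pV;
  pcol : pE -> colour;
  pside : pV -> bool;
  prot : pV -> pV }.

Section PH.
Variable K : phex.
Local Notation V := (pV K).
Local Notation E := (pE K).

Definition blue (e : E) := is_blue (pcol e).
Definition red (e : E) := is_red (pcol e).
Definition white (e : E) := is_white (pcol e).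
Definition end1 (e : E) := (pends e).1.
Definition end2 (e : E) := (pends e).2.

Definition incident (e : E) (v : V) := (end1 e == v) || (end2 e == v).
Definition joins (e : E) (u w : V) :=
  ((end1 e == u) && (end2 e == w)) || ((end1 e == w) && (end2 e == u)).

(* antipodal vertex in its hexagon: \bar v_i = v_{i+3} *)
Definition vbar (v : V) : V := iter 3 (@prot K) v.

(* the hexagon (vertex set of the blue 6-cycle) containing v *)
Definition hex_of (v : V) : {set V} := [set iter (nat_of_ord k) (@prot K) v | k : 'I_6].
Definition is_hexagon (h : {set V}) : bool := [exists v, h == hex_of v].

Definition is_pseudohex : Prop :=
  (* bipartite (hence no loops) *)
  (forall e : E, pside (end1 e) != pside (end2 e)) /\
  (* (i) blue edges form vertex-disjoint 6-cycles covering V *)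
  (forall v : V, iter 6 (@prot K) v = v /\
     forall k, 0 < k < 6 -> iter k (@prot K) v != v) /\
  (forall e : E, blue e -> exists v : V, joins e v (prot v)) /\
  (forall v : V, #|[set e : E | blue e && joins e v (prot v)]| = 1) /\
  (forall x : V, exists e : E, red e && joins e x (vbar x)) /\
  (forall v : V, #|[set e : E | white e && incident e v]| = 1).

Definition real (e : E) : bool :=
  let x := end1 e in let y := end2 e in
  [&& white e,
      [exists f : E, white f && joins f (vbar x) (vbar y)] &
      [forall r : E, red r ==>
         ((incident r x || incident r y || incident r (vbar x) || incident r (vbar y))
          ==> (joins r x (vbar x) || joins r y (vbar y)))]].
Definition derived (e : E) : bool := white e && ~~ real e.

Definition is_end (e : E) : Prop :=
  red e /\ exists f : E, white f && joins f (end1 e) (end2 e).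

Definition hexT : finType := {h : {set V} | is_hexagon h}.

Definition GK_adj : rel hexT := fun h1 h2 =>
  (h1 != h2) &&
  [exists e : E, real e &&
     (((end1 e \in val h1) && (end2 e \in val h2)) ||
      ((end1 e \in val h2) && (end2 e \in val h1)))].

(* G^K has no cycle of length 2: two pairs {e, \bar e} of real white edges
   joining the same two distinct hexagons coincide. *)
Definition GK_no_2cycle : Prop :=
  forall e f : E, real e -> real f ->
    hex_of (end1 e) != hex_of (end2 e) ->
    (((hex_of (end1 f) == hex_of (end1 e)) && (hex_of (end2 f) == hex_of (end2 e))) ||
     ((hex_of (end1 f) == hex_of (end2 e)) && (hex_of (end2 f) == hex_of (end1 e)))) ->
    joins f (end1 e) (end2 e) || joins f (vbar (end1 e)) (vbar (end2 e)).

End PH.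

Definition connected_in (T : finType) (adj : rel T) (A : {set T}) : Prop :=
  forall x y, x \in A -> y \in A ->
    connect [rel u w | [&& adj u w, u \in A & w \in A]] x y.

Definition two_connected (T : finType) (adj : rel T) : Prop :=
  2 < #|T| /\ connected_in adj [set: T] /\
  forall v : T, connected_in adj (setT :\ v).

Definition proper_pseudohex (K : phex) : Prop :=
  (forall e : pE K, ~ is_end e) /\ two_connected (@GK_adj K) /\ GK_no_2cycle K.

(* The fork F: vertices 0 = x, 1 = y, 2 = z, 3 = a, 4 = b,
   edges zx, zy, za, ab. *)
Definition fork_adj (p q : 'I_5) : bool :=
  (nat_of_ord p, nat_of_ord q) \in
    [:: (2, 0); (0, 2); (2, 1); (1, 2); (2, 3); (3, 2); (3, 4); (4, 3)].

Definition deg (T : finType) (adj : rel T) (v : T) : nat := #|[set w | adj v w]|.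

(* adjacency of the graph obtained from (T', adj') by adding the bold fork,
   with the half-edges at x, y, b attached to g1, g2, g3 respectively *)
Definition fork_attach (T' : finType) (g1 g2 g3 : T') (p : 'I_5) (u : T') : bool :=
  [|| (nat_of_ord p == 0) && (u == g1),
      (nat_of_ord p == 1) && (u == g2) |
      (nat_of_ord p == 4) && (u == g3)].

Definition fork_sum_adj (T' : finType) (adj' : rel T') (g1 g2 g3 : T')
    (u v : T' + 'I_5) : bool :=
  match u, v with
  | inl a, inl b => adj' a b
  | inr p, inr q => fork_adj p q
  | inl a, inr p => fork_attach g1 g2 g3 p a
  | inr p, inl a => fork_attach g1 g2 g3 p a
  end.

Definition bold_fork_addition (T' T : finType) (adj' : rel T') (adj : rel T)
    (phi : T' + 'I_5 -> T) (g1 g2 g3 : T') : Prop :=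
  bijective phi /\ uniq [:: g1; g2; g3] /\
  deg adj' g1 = 2 /\ deg adj' g2 = 2 /\ deg adj' g3 = 2 /\
  forall u v, adj (phi u) (phi v) = fork_sum_adj adj' g1 g2 g3 u v.

Definition F_addition (K K' : phex) (phi : hexT K' + 'I_5 -> hexT K)
    (g1 g2 g3 : hexT K') : Prop :=
  bold_fork_addition (@GK_adj K') (@GK_adj K) phi g1 g2 g3.

Definition F_K (K K' : phex) (phi : hexT K' + 'I_5 -> hexT K) : {set hexT K} :=
  [set phi (inr p) | p : 'I_5].

Definition vset_of (K : phex) (H : {set hexT K}) : {set pV K} :=
  [set v | [exists h in H, v \in val h]].

Definition no_edge (K : phex) (VF : {set pV K}) (e : pE K) : bool :=
  derived e && ((end1 e \in VF) || (end2 e \in VF)).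

(* N is the union of the chosen
   perfect matchings N_h of the blue 6-cycles h in H: a set of blue edges
   inside V(H) covering each vertex of V(H) exactly once. The contracted
   paths/cycles are the components of the subgraph formed by N and all
   white edges with an endpoint in V(H); two edges lie in the same component
   iff they are linked by a chain of edges of that subgraph, consecutive ones
   sharing a vertex. *)
Definition contracted_edges (K : phex) (VH : {set pV K}) (N : {set pE K}) : {set pE K} :=
  N :|: [set e | white e && ((end1 e \in VH) || (end2 e \in VH))].

Definition share_vertex (K : phex) (e f : pE K) : bool :=
  incident e (end1 f) || incident e (end2 f).

Definition safe_reduction (K : phex) (H : {set hexT K}) (N : {set pE K}) : Prop :=
  let VH := vset_of H in
  let S := contracted_edges VH N in
  (forall e, e \in N -> [&& blue e, end1 e \in VH & end2 e \in VH]) /\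
  (forall v, v \in VH -> #|[set e in N | incident e v]| = 1) /\
  (forall e f, e \in S -> f \in S -> derived e -> derived f ->
     connect [rel g1 g2 | [&& g1 \in S, g2 \in S & share_vertex g1 g2]] e f ->
     e = f).

Definition safely_reducible (K : phex) (H : {set hexT K}) : Prop :=
  exists N : {set pE K}, safe_reduction H N.

From mathcomp Require Import all_boot.
Set Implicit Arguments. Unset Strict Implicit. Unset Printing Implicit Defensive.

(* Number the hexagons of F_K as x = 0, y = 1, z = 2, a = 3, b = 4 (the fork
   has edges zx, zy, za, ab, and x, y, b are attached to K'), and call
   "slot (k, i)" the vertex i steps along hexagon k from a base vertex.
   Taking as bases the ends of the real white edges of the fork, everything
   about V(F_K) that matters for a reduction is a finite "configuration":
   where the real edges land, which antipodal pairs of x, y, b carry the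
   real edges towards K', one bipartition side, and the permutation by which
   derived white edges join the eight remaining vertices (these edges stay
   in V(F_K) by hypothesis, and without ends no white edge joins antipodes).
   A choice of perfect matchings gives a safe reduction as soon as some
   labelling of the slots is constant along white and matching edges and
   separates the derived edges: distinct derived edges then lie on distinct
   contracted paths. *)

Section Incidence.
Variable K : phex.
Implicit Types (e : pE K) (u w x : pV K).

Lemma joinsC e u w : joins e u w = joins e w u.
Proof. by rewrite /joins orbC. Qed.

Lemma joins_ends e : joins e (end1 e) (end2 e).
Proof. by rewrite /joins !eqxx. Qed.

Lemma joins_incl e u w : joins e u w -> incident e u.
Proof. by rewrite /joins /incident => /orP [] /andP [E1 E2]; rewrite ?E1 ?E2 ?orbT. Qed.

Lemma joins_incr e u w : joins e u w -> incident e w.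
Proof. by rewrite joinsC; apply: joins_incl. Qed.

Lemma joins_incident e u w x : joins e u w -> incident e x -> x = u \/ x = w.
Proof.
by rewrite /joins /incident => /orP [] /andP [/eqP <- /eqP <-] /orP [] /eqP ->; auto.
Qed.

Lemma incident_joins e u : incident e u -> exists w, joins e u w.
Proof.
rewrite /incident => /orP [] /eqP <-; first by exists (end2 e); apply: joins_ends.
by exists (end1 e); rewrite joinsC joins_ends.
Qed.

Lemma joins_eq e u w u' w' : joins e u w -> joins e u' w' ->
  (u' = u /\ w' = w) \/ (u' = w /\ w' = u).
Proof.
by rewrite /joins => /orP [] /andP [/eqP <- /eqP <-] /orP [] /andP [/eqP <- /eqP <-]; auto.
Qed.

Lemma joins_ends_in e u w (A : {pred pV K}) : joins e u w ->
  ((end1 e \in A) || (end2 e \in A)) = (u \in A) || (w \in A).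
Proof. by move/joins_eq/(_ (joins_ends e)) => [[-> ->]|[-> ->]]; rewrite // orbC. Qed.

End Incidence.

Section PseudohexFacts.
Variable K : phex.
Hypothesis HK : is_pseudohex K.
Local Notation V := (pV K).
Local Notation E := (pE K).
Local Notation rot := (@prot K).

Lemma edge_sides (e : E) : pside (end1 e) != pside (end2 e).
Proof. by case: HK => H _; apply: H. Qed.

Lemma joins_neq (e : E) u w : joins e u w -> u != w.
Proof.
move/joins_eq/(_ (joins_ends e)) => [[<- <-]|[<- <-]]; apply: contraNneq (edge_sides e).
  by move=> ->.
by move=> ->.
Qed.

Lemma joins_other (e : E) u w w' : joins e u w -> joins e u w' -> w' = w.
Proof.
move=> J J'; case: (joins_eq J J') => [[_ ->]//|[E1 E2]]; subst.
by move: (joins_neq J); rewrite eqxx.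
Qed.

Lemma rot_order (v : V) : iter 6 rot v = v.
Proof. by case: HK => _ [H _]; case: (H v). Qed.

Lemma iter_rot_mod i (v : V) : iter i rot v = iter (i %% 6) rot v.
Proof.
have periodic n (w : V) : iter (n * 6) rot w = w.
  by elim: n w => [|n IH] w //; rewrite mulSn iterD rot_order IH.
by rewrite {1}(divn_eq i 6) addnC iterD periodic.
Qed.

Lemma iter_rot_inj i j (v : V) : i < 6 -> j < 6 -> iter i rot v = iter j rot v -> i = j.
Proof.
wlog lij : i j / i <= j => [W|] hi hj Eij.
  by case: (leqP i j) => h; [apply: W | apply/esym; apply: W => //; apply: ltnW].
case: (ltngtP i j) lij => // lt _.
have /negP[] : iter (j - i) rot (iter i rot v) != iter i rot v.
  case: HK => _ [H _]; apply: (proj2 (H _)).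
  by rewrite subn_gt0 lt (leq_ltn_trans (leq_subr _ _) hj).
by rewrite -iterD subnK ?(ltnW lt) // Eij.
Qed.

Lemma vbarK (v : V) : vbar (vbar v) = v.
Proof. by rewrite /vbar -iterD rot_order. Qed.

Lemma hexP (v w : V) : reflect (exists2 k, k < 6 & w = iter k rot v) (w \in hex_of v).
Proof.
apply: (iffP imsetP) => [[k _ ->]|[k hk ->]]; first by exists k.
by exists (Ordinal hk).
Qed.

Lemma hex_iter (v : V) i : iter i rot v \in hex_of v.
Proof. by apply/hexP; exists (i %% 6); rewrite ?ltn_pmod // -iter_rot_mod. Qed.

Lemma hex_self (v : V) : v \in hex_of v.
Proof. exact: (hex_iter v 0). Qed.

Lemma hex_vbar (v : V) : vbar v \in hex_of v.
Proof. exact: hex_iter. Qed.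

Lemma hex_same (v w : V) : w \in hex_of v -> hex_of w = hex_of v.
Proof.
case/hexP => k hk ->; apply/setP => u; apply/hexP/hexP => [[j hj ->]|[j hj ->]].
  by exists ((j + k) %% 6); rewrite ?ltn_pmod // -iter_rot_mod iterD.
exists ((j + (6 - k)) %% 6); first by rewrite ltn_pmod.
by rewrite -iter_rot_mod -iterD -addnA subnK ?(ltnW hk) // iterD rot_order.
Qed.

Lemma hex_vbar_eq (v : V) : hex_of (vbar v) = hex_of v.
Proof. exact: hex_same (hex_vbar v). Qed.

Lemma hexT_val (h : hexT K) (v : V) : v \in val h -> val h = hex_of v.
Proof. by case: h => h /= /existsP [b /eqP ->] hv; rewrite (hex_same hv). Qed.

Lemma hexT_eq (h1 h2 : hexT K) v : v \in val h1 -> v \in val h2 -> h1 = h2.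
Proof. by move=> a b; apply: val_inj; rewrite (hexT_val a) (hexT_val b). Qed.

Lemma blue_edge_ex (v : V) : exists2 e : E, blue e & joins e v (rot v).
Proof.
case: HK => _ [_ [_ [H _]]].
have : #|[set e : E | blue e && joins e v (rot v)]| > 0 by rewrite H.
by case/card_gt0P => e; rewrite inE => /andP [? ?]; exists e.
Qed.

Lemma blue_edge_uniq (v : V) (e f : E) :
  blue e -> joins e v (rot v) -> blue f -> joins f v (rot v) -> e = f.
Proof.
case: HK => _ [_ [_ [H _]]] be je bf jf.
have /eqP /cards1P [g Hg] := H v.
have : e \in [set e : E | blue e && joins e v (rot v)] by rewrite inE be je.
have : f \in [set e : E | blue e && joins e v (rot v)] by rewrite inE bf jf.
by rewrite Hg !inE => /eqP -> /eqP ->.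
Qed.

Lemma side_iter i (v : V) : pside (iter i rot v) = pside v (+) odd i.
Proof.
elim: i => [|i IH] /=; first by rewrite addbF.
have [e _ J] := blue_edge_ex (iter i rot v).
have := edge_sides e; case/orP: J => /andP [/eqP -> /eqP ->];
  by rewrite IH; case: (pside v); case: (odd i); case: (pside (rot _)).
Qed.

Lemma white_edge_ex (v : V) : exists2 e : E, white e & incident e v.
Proof.
case: HK => _ [_ [_ [_ [_ H]]]].
have : #|[set e : E | white e && incident e v]| > 0 by rewrite H.
by case/card_gt0P => e; rewrite inE => /andP [? ?]; exists e.
Qed.

Lemma white_edge_uniq (v : V) (e f : E) :
  white e -> incident e v -> white f -> incident f v -> e = f.
Proof.
case: HK => _ [_ [_ [_ [_ H]]]] we ie wf if_.
have /eqP /cards1P [g Hg] := H v.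
have : e \in [set e : E | white e && incident e v] by rewrite inE we ie.
have : f \in [set e : E | white e && incident e v] by rewrite inE wf if_.
by rewrite Hg !inE => /eqP -> /eqP ->.
Qed.

Lemma no_white_antipodal (e : E) v :
  (forall r : E, ~ is_end r) -> white e -> joins e v (vbar v) -> False.
Proof.
move=> noend we J; case: HK => _ [_ [_ [_ [/(_ v) [r /andP [rr Jr] _]]]]].
apply: (noend r); split => //; exists e; rewrite we /=.
by case: (joins_eq Jr (joins_ends r)) => [[-> ->]|[-> ->]]; rewrite // joinsC.
Qed.

Lemma real_antipodal (e : E) u w :
  real e -> joins e u w -> exists2 f : E, real f & joins f (vbar u) (vbar w).
Proof.
move=> re Je; wlog [<- <-] : u w Je / end1 e = u /\ end2 e = w => [W|].
  have [f rf Jf] := W _ _ (joins_ends e) (conj erefl erefl).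
  by exists f => //; case: (joins_eq Je (joins_ends e)) => [[<- <-]|[<- <-]]; rewrite // joinsC.
case/and3P: re => we /existsP [f /andP [wf Jf]] /forallP Hr.
exists f => //; apply/and3P; split=> //.
  by apply/existsP; exists e; rewrite we; case: (joins_eq Jf (joins_ends f)) =>
    [[-> ->]|[-> ->]]; rewrite !vbarK ?joins_ends // joinsC joins_ends.
apply/forallP => r; apply/implyP => rr; apply/implyP => ant.
have := Hr r; rewrite rr /= => /implyP H.
case: (joins_eq Jf (joins_ends f)) => [[h1 h2]|[h1 h2]]; move: ant; rewrite h1 h2 !vbarK => ant;
  (have := H (ltac:(by move: ant; do 4 case: (incident r _))));
  by rewrite ![joins r (vbar _) _]joinsC // orbC.
Qed.

End PseudohexFacts.

(* A finite model of the neighbourhood of the fork.  Slot (k, i) stands for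
   the vertex at distance i along hexagon k from its base vertex; hexagons are
   numbered x = 0, y = 1, z = 2, a = 3, b = 4. *)
Definition slot := (nat * nat)%type.

Definition slots : seq slot := [seq (k, i) | k <- iota 0 5, i <- iota 0 6].

Lemma mem_slots (u : slot) : (u \in slots) = (u.1 < 5) && (u.2 < 6).
Proof.
case: u => k i; apply/allpairsP/andP => [[[k' i'] [hk hi [-> ->]]]|[hk hi]].
  by move: hk hi; rewrite !mem_iota.
by exists (k, i); rewrite !mem_iota.
Qed.

Lemma mod3_cases a c : a < 6 -> c < 6 -> a %% 3 = c %% 3 -> a = c \/ a = (c + 3) %% 6.
Proof. by move: a c => [|[|[|[|[|[|a]]]]]] [|[|[|[|[|[|c]]]]]] //; auto. Qed.

Lemma residue12 n : n %% 3 != 0 -> n %% 3 \in [:: 1; 2].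
Proof. by case: (n %% 3) (ltn_pmod n (isT : 0 < 3)) => [|[|[|]]]. Qed.

(* A configuration records where the real white edges of the fork land (the
   base of x, y, a and b is the endpoint of its real edge towards z, z, z and
   a respectively, and the base of z is the far end of the edge from x), the
   residues mod 3 of the pairs of exits of x, y and b, the side of the base of
   x, and how the free antipodal pairs of x, y, a, b are joined: the free
   vertex of pair t on side [false] is joined to the one of pair [deriv`_t]
   on side [true]. *)
Record config := Config {
  rot_y : nat; rot_a : nat; rot_b : nat;
  exit_x : nat; exit_y : nat; exit_b : nat;
  side_x : bool;
  deriv : seq nat }.

Definition dmap (c : config) (t : nat) : nat := nth 0 (deriv c) t.

(* Bipartition side of the base of hexagon k, forced by the real edges. *)
Definition base_side (c : config) (k : nat) : bool :=
  let sz := ~~ side_x c in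
  let sa := ~~ (sz (+) odd (rot_a c)) in
  match k with
  | 0 => side_x c | 1 => ~~ (sz (+) odd (rot_y c)) | 2 => sz | 3 => sa
  | _ => ~~ (sa (+) odd (rot_b c)) end.

Definition slot_side (c : config) (u : slot) : bool := base_side c u.1 (+) odd u.2.

(* The four hexagons having a free antipodal pair, and the residue mod 3 of
   that pair (the two other pairs are used by real edges or exits). *)
Definition free_hex (t : nat) : nat := nth 0 [:: 0; 1; 3; 4] t.

Definition free_res (c : config) (k : nat) : nat :=
  3 - (match k with 0 => exit_x c | 1 => exit_y c | 3 => rot_b c | _ => exit_b c end) %% 3.

Definition free_slot (c : config) (t : nat) (b : bool) : slot :=
  let u := (free_hex t, free_res c (free_hex t)) in
  if slot_side c u == b then u else (u.1, u.2 + 3).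

Definition real_edges (c : config) : seq (slot * slot) :=
  [:: ((0, 0), (2, 0)); ((0, 3), (2, 3));
      ((1, 0), (2, rot_y c)); ((1, 3), (2, (rot_y c + 3) %% 6));
      ((3, 0), (2, rot_a c)); ((3, 3), (2, (rot_a c + 3) %% 6));
      ((4, 0), (3, rot_b c)); ((4, 3), (3, (rot_b c + 3) %% 6))].

Definition derived_edges (c : config) : seq (slot * slot) :=
  [seq (free_slot c t false, free_slot c (dmap c t) true) | t <- iota 0 4].

Definition white_edges (c : config) : seq (slot * slot) := real_edges c ++ derived_edges c.

Definition real_slots (c : config) : seq slot :=
  flatten [seq [:: e.1; e.2] | e <- real_edges c].

Definition exit_slots (c : config) : seq slot :=
  [:: (0, exit_x c); (0, exit_x c + 3); (1, exit_y c); (1, exit_y c + 3);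
      (4, exit_b c); (4, exit_b c + 3)].

Definition free_slots (c : config) : seq slot :=
  flatten [seq [:: free_slot c t true; free_slot c t false] | t <- iota 0 4].

Definition well_formed (c : config) : bool :=
  [&& all (fun u => (u \in real_slots c) || (u \in exit_slots c) || (u \in free_slots c)) slots,
      all (fun u => (u \notin real_slots c) && (u \notin exit_slots c)) (free_slots c),
      all (mem slots) (real_slots c ++ exit_slots c ++ free_slots c) &
      all (fun t => [&& slot_side c (free_slot c t true), ~~ slot_side c (free_slot c t false),
         (free_slot c t true).1 == free_hex t, (free_slot c t false).1 == free_hex t &
         (free_slot c t true).2 == ((free_slot c t false).2 + 3) %% 6]) (iota 0 4)].

Lemma real_slotsP (c : config) u :
  reflect (exists2 p, p \in real_edges c & u = p.1 \/ u = p.2) (u \in real_slots c).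
Proof.
apply: (iffP flattenP) => [[l /mapP [p hp ->]]|[p hp Eu]].
  by rewrite !inE => /orP [] /eqP ->; exists p; auto.
by exists [:: p.1; p.2]; [apply: map_f | case: Eu => ->; rewrite !inE eqxx ?orbT].
Qed.

Lemma free_slotsP (c : config) u :
  reflect (exists t b, t < 4 /\ u = free_slot c t b) (u \in free_slots c).
Proof.
apply: (iffP flattenP) => [[l /mapP [t ht ->]]|[t [b [ht ->]]]].
  by rewrite mem_iota in ht; rewrite !inE => /orP [] /eqP ->; [exists t, true | exists t, false].
exists [:: free_slot c t true; free_slot c t false]; first by apply: map_f; rewrite mem_iota.
by case: b; rewrite !inE eqxx ?orbT.
Qed.

Section WellFormed.
Variable c : config.
Hypothesis wf : well_formed c.

Lemma wf_cover u : u \in slots ->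
  [\/ u \in real_slots c, u \in exit_slots c | u \in free_slots c].
Proof.
case/and4P: wf => /allP cover _ _ _ /cover.
by case/orP => [/orP [] h|h]; [apply: Or31|apply: Or32|apply: Or33].
Qed.

Lemma wf_free_apart u : u \in free_slots c -> (u \notin real_slots c) && (u \notin exit_slots c).
Proof. by case/and4P: wf => _ /allP apart _ _ /apart. Qed.

Lemma wf_in_slots u : u \in real_slots c ++ exit_slots c ++ free_slots c -> u \in slots.
Proof. by case/and4P: wf => _ _ /allP bound _ /bound. Qed.

Lemma wf_free_slot t : t < 4 ->
  [/\ slot_side c (free_slot c t true), ~~ slot_side c (free_slot c t false),
      (free_slot c t true).1 = free_hex t, (free_slot c t false).1 = free_hex t &
      (free_slot c t true).2 = ((free_slot c t false).2 + 3) %% 6].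
Proof.
case/and4P: wf => _ _ _ /allP free ht; have := free t; rewrite mem_iota ht => /(_ isT).
by case/and5P => ? ? /eqP ? /eqP ? /eqP ?.
Qed.

Lemma wf_free_slot_inj t t' b b' : t < 4 -> t' < 4 ->
  free_slot c t b = free_slot c t' b' -> t = t'.
Proof.
move=> ht ht' E.
have [_ _ h1 h2 _] := wf_free_slot ht; have [_ _ h1' h2' _] := wf_free_slot ht'.
have : free_hex t = free_hex t'.
  by move/(congr1 fst): E; case: b b' => [] []; rewrite ?h1 ?h2 ?h1' ?h2'.
by move: t t' ht ht' {h1 h2 h1' h2' E} => [|[|[|[|t]]]] [|[|[|[|t']]]].
Qed.

End WellFormed.

(* A choice of one of the two perfect matchings in each hexagon: with
   [choice k = false] hexagon k is matched by {01, 23, 45}, otherwise by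
   {12, 34, 50}; [partner] gives the matched slot. *)
Definition partner (choice : nat -> bool) (u : slot) : slot :=
  (u.1, if choice u.1 then (if odd u.2 then (u.2 + 1) %% 6 else (u.2 + 5) %% 6)
        else (if odd u.2 then u.2.-1 else u.2.+1)).

Lemma partner_facts choice (u : slot) : u.2 < 6 ->
  [/\ (partner choice u).1 = u.1, (partner choice u).2 < 6,
      partner choice (partner choice u) = u &
      (partner choice u).2 = (u.2 + 1) %% 6 \/ u.2 = ((partner choice u).2 + 1) %% 6].
Proof.
case: u => k i /= hi; rewrite /partner /=.
by case: (choice k); case: i hi => [|[|[|[|[|[|i]]]]]] //= _; split=> //; by [left | right].
Qed.

(* Contracted paths of the model: from a slot, alternately step to the
   matched slot and along the white edge of the model, if any.  Twenty double
   steps cover the thirty slots. *)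
Fixpoint white_mate (l : seq (slot * slot)) (u : slot) : option slot :=
  if l is (a, b) :: l' then
    if a == u then Some b else if b == u then Some a else white_mate l' u
  else None.

Fixpoint trace (l : seq (slot * slot)) choice (n : nat) (start u : slot) : seq slot :=
  if n is n'.+1 then
    let v := partner choice u in
    match white_mate l v with
    | Some w => if w == start then [:: v] else v :: w :: trace l choice n' start w
    | None => [:: v]
    end
  else [::].

Definition slot_index (u : slot) : nat := 6 * u.1 + u.2.

(* Candidate labelling: the slots met from either end of the t-th derived
   edge get label t (the other slots keep label 100).  The [let] makes the
   table computed once per labelling. *)
Definition label_table (c : config) choice : seq nat :=
  let paint tab t u := foldl (fun tab v => set_nth 0 tab (slot_index v) t) tab
                             (u :: trace (white_edges c) choice 20 u u) in
  foldl (fun tab t => paint (paint tab t (free_slot c t false)) t (free_slot c (dmap c t) true))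
    (nseq 30 100) (iota 0 4).

Definition labelling (c : config) choice : slot -> nat :=
  let tab := label_table c choice in fun u => nth 0 tab (slot_index u).

Definition certifies (c : config) (choice : nat -> bool) : bool :=
  let lab := labelling c choice in
  [&& all (fun e => lab e.1 == lab e.2) (white_edges c),
      all (fun u => lab u == lab (partner choice u)) slots &
      uniq [seq lab (free_slot c t false) | t <- iota 0 4]].

Definition choice_of (n : nat) : nat -> bool := fun k => odd (n %/ 2 ^ k).

(* [find] rather than [has], so that the evaluation stops at the first
   certified choice. *)
Definition config_ok (c : config) : bool :=
  well_formed c && (find (fun n => certifies c (choice_of n)) (iota 0 32) < 32).

Definition derangement (d : seq nat) : bool :=
  uniq d && all (fun t => nth 0 d t != t) (iota 0 4).

(* Rotations compatible with white edges forming a matching: the real edges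
   from y and a land on antipodal pairs of z distinct from that of x and from
   each other, and the one from b avoids the pair of a used towards z. *)
Definition admissible (jy ja jb : nat) : bool :=
  [&& jy %% 3 != 0, ja %% 3 != 0, ja %% 3 != jy %% 3 & jb %% 3 != 0].

(* The exhaustive check, written with [if] so that its evaluation skips the
   non-admissible rotations and the non-derangements. *)
Definition all_configs_ok : bool :=
  all (fun jy => all (fun ja => all (fun jb => if ~~ admissible jy ja jb then true else
  all (fun ex => all (fun ey => all (fun eb => all (fun sx =>
  all (fun d0 => all (fun d1 => all (fun d2 => all (fun d3 =>
    if derangement [:: d0; d1; d2; d3]
    then config_ok (Config jy ja jb ex ey eb sx [:: d0; d1; d2; d3]) else true)
  (iota 0 4)) (iota 0 4)) (iota 0 4)) (iota 0 4)) [:: true; false])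
  [:: 1; 2]) [:: 1; 2]) [:: 1; 2]) (iota 0 6)) (iota 0 6)) (iota 0 6).

Lemma all_configs_ok_true : all_configs_ok.
Proof. by vm_compute. Qed.

Lemma config_certified jy ja jb ex ey eb sx d :
  jy < 6 -> ja < 6 -> jb < 6 -> admissible jy ja jb ->
  ex \in [:: 1; 2] -> ey \in [:: 1; 2] -> eb \in [:: 1; 2] ->
  size d = 4 -> all (gtn 4) d -> derangement d ->
  well_formed (Config jy ja jb ex ey eb sx d) /\
  exists n, certifies (Config jy ja jb ex ey eb sx d) (choice_of n).
Proof.
move=> hjy hja hjb adm hex hey heb.
case: d => [|d0 [|d1 [|d2 [|d3 [|]]]]] // _ /and5P [hd0 hd1 hd2 hd3 _] der.
have /allP/(_ jy) := all_configs_ok_true; rewrite mem_iota => /(_ hjy).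
move=> /allP/(_ ja); rewrite mem_iota => /(_ hja).
move=> /allP/(_ jb); rewrite mem_iota adm => /(_ hjb).
move=> /allP/(_ ex hex) /allP/(_ ey hey) /allP/(_ eb heb).
have hsx : sx \in [:: true; false] by case: sx.
move=> /allP/(_ sx hsx).
move=> /allP/(_ d0); rewrite mem_iota => /(_ hd0).
move=> /allP/(_ d1); rewrite mem_iota => /(_ hd1).
move=> /allP/(_ d2); rewrite mem_iota => /(_ hd2).
move=> /allP/(_ d3); rewrite mem_iota der => /(_ hd3) /andP [wf].
rewrite -{2}(size_iota 0 32) -has_find => /hasP [n _ cn].
by split=> //; exists n.
Qed.

Section Transfer.
Variable K : phex.
Hypothesis HK : is_pseudohex K.
Hypothesis noend : forall e : pE K, ~ is_end e.
Local Notation V := (pV K).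
Local Notation E := (pE K).
Local Notation rot := (@prot K).

Variable H : {set hexT K}.
Local Notation VH := (vset_of H).

Variable base : nat -> V.
Definition vtx (u : slot) : V := iter u.2 rot (base u.1).

Hypothesis VH_vtx : forall v, v \in VH <-> exists2 u, u \in slots & v = vtx u.
Hypothesis vtx_inj : {in slots &, injective vtx}.

Definition white_link (x y : slot) := exists2 e : E, white e & joins e (vtx x) (vtx y).
Definition real_link (x y : slot) := exists2 e : E, real e & joins e (vtx x) (vtx y).

Variables jy ja jb ex ey eb : nat.
Hypotheses (jy_lt6 : jy < 6) (ja_lt6 : ja < 6) (jb_lt6 : jb < 6).
Hypotheses (ex_lt6 : ex < 6) (ey_lt6 : ey < 6) (eb_lt6 : eb < 6).
Hypothesis link_xz : real_link (0, 0) (2, 0).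
Hypothesis link_yz : real_link (1, 0) (2, jy).
Hypothesis link_az : real_link (3, 0) (2, ja).
Hypothesis link_ba : real_link (4, 0) (3, jb).

Definition is_exit (u : slot) : bool :=
  [|| (u.1 == 0) && (u.2 %% 3 == ex %% 3), (u.1 == 1) && (u.2 %% 3 == ey %% 3) |
      (u.1 == 4) && (u.2 %% 3 == eb %% 3)].
Definition leaves (u : slot) :=
  exists2 e : E, white e & exists2 w, joins e (vtx u) w & w \notin VH.
Hypothesis leaves_exit : forall u, u \in slots -> leaves u <-> is_exit u.
Hypothesis derived_inside : forall e : E, derived e ->
  (end1 e \in VH) || (end2 e \in VH) -> (end1 e \in VH) && (end2 e \in VH).

Lemma slotP k i : k < 5 -> i < 6 -> (k, i) \in slots.
Proof. by move=> hk hi; rewrite mem_slots hk hi. Qed.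

Lemma slot_antipode k i : (k, (i + 3) %% 6) \in slots = (k < 5).
Proof. by rewrite mem_slots ltn_pmod ?andbT. Qed.

Lemma vtx_VH u : u \in slots -> vtx u \in VH.
Proof. by move=> hu; apply/VH_vtx; exists u. Qed.

Lemma vtx_mod k i : vtx (k, i) = vtx (k, i %% 6).
Proof. by rewrite /vtx /= iter_rot_mod. Qed.

Lemma rot_vtx (u : slot) : rot (vtx u) = vtx (u.1, (u.2 + 1) %% 6).
Proof. by rewrite -vtx_mod /vtx /= addn1. Qed.

Lemma vbar_vtx k i : vbar (vtx (k, i)) = vtx (k, (i + 3) %% 6).
Proof. by rewrite -vtx_mod /vtx /= /vbar -iterD addnC. Qed.

Lemma white_link_sym x y : white_link x y -> white_link y x.
Proof. by case=> e we J; exists e; rewrite // joinsC. Qed.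

Lemma real_white_link x y : real_link x y -> white_link x y.
Proof. by case=> e /and3P [we _ _] J; exists e. Qed.

Lemma white_link_fun x y z : x \in slots -> y \in slots -> z \in slots ->
  white_link x y -> white_link x z -> y = z.
Proof.
move=> hx hy hz [e we Je] [f wf Jf].
have ef := white_edge_uniq HK we (joins_incl Je) wf (joins_incl Jf); subst f.
by apply: vtx_inj; rewrite // (joins_other HK Je Jf).
Qed.

Lemma white_link_stays x y : x \in slots -> y \in slots ->
  white_link x y -> leaves x -> False.
Proof.
move=> hx hy [e we Je] [f wf [w Jf hw]].
have ef := white_edge_uniq HK we (joins_incl Je) wf (joins_incl Jf); subst f.
by move: hw; rewrite (joins_other HK Je Jf) vtx_VH.
Qed.

Lemma white_link_sides x y : white_link x y -> pside (vtx x) != pside (vtx y).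
Proof.
case=> e _ J; have := edge_sides HK e.
by case/orP: J => /andP [/eqP -> /eqP ->] //; rewrite eq_sym.
Qed.

Lemma real_link_antipodal k i k' i' : real_link (k, i) (k', i') ->
  real_link (k, (i + 3) %% 6) (k', (i' + 3) %% 6).
Proof.
by case=> e re J; have [f rf Jf] := real_antipodal HK re J; exists f; rewrite // -!vbar_vtx.
Qed.

Lemma link_residue k j j' p q r : k < 5 -> j < 6 -> j' < 6 ->
  [/\ p \in slots, q \in slots & r \in slots] -> r != p -> r != q ->
  white_link (k, j) p -> white_link (k, (j + 3) %% 6) q -> white_link (k, j') r ->
  j' %% 3 != j %% 3.
Proof.
move=> hk hj hj' [hp hq hr] nrp nrq Wp Wq Wr.
apply/negP => /eqP /(mod3_cases hj' hj) [] Ej'; rewrite Ej' in Wr.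
  by move/eqP: nrp; apply; apply: white_link_fun (slotP hk hj) hr hp Wr Wp.
by move/eqP: nrq; apply; apply: white_link_fun Wr Wq; rewrite ?slot_antipode.
Qed.

Lemma exit_residue k j j' p q : k < 5 -> j < 6 -> j' < 6 -> p \in slots -> q \in slots ->
  white_link (k, j) p -> white_link (k, (j + 3) %% 6) q -> leaves (k, j') ->
  j' %% 3 != j %% 3.
Proof.
move=> hk hj hj' hp hq Wp Wq L.
apply/negP => /eqP /(mod3_cases hj' hj) [] Ej'; rewrite Ej' in L.
  exact: white_link_stays (slotP hk hj) hp Wp L.
by apply: white_link_stays Wq L; rewrite ?slot_antipode.
Qed.

Lemma link_xz' : real_link (0, 3) (2, 3).
Proof. exact: real_link_antipodal link_xz. Qed.
Lemma link_yz' : real_link (1, 3) (2, (jy + 3) %% 6).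
Proof. exact: real_link_antipodal link_yz. Qed.
Lemma link_az' : real_link (3, 3) (2, (ja + 3) %% 6).
Proof. exact: real_link_antipodal link_az. Qed.
Lemma link_ba' : real_link (4, 3) (3, (jb + 3) %% 6).
Proof. exact: real_link_antipodal link_ba. Qed.

(* Since white edges form a matching, the rotations are admissible. *)
Lemma rotations_admissible : admissible jy ja jb.
Proof.
have W1 := white_link_sym (real_white_link link_xz).
have W2 := white_link_sym (real_white_link link_xz').
have W3 := white_link_sym (real_white_link link_yz).
have W4 := white_link_sym (real_white_link link_yz').
have W5 := white_link_sym (real_white_link link_az).
have W7 := white_link_sym (real_white_link link_ba).
apply/and4P; split.
- by apply: (link_residue _ _ _ _ _ _ W1 W2 W3); rewrite ?mem_slots ?jy_lt6.
- by apply: (link_residue _ _ _ _ _ _ W1 W2 W5); rewrite ?mem_slots ?ja_lt6.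
- by apply: (link_residue _ _ _ _ _ _ W3 W4 W5); rewrite ?mem_slots ?ja_lt6.
- apply: (link_residue _ _ _ _ _ _ (real_white_link link_az) (real_white_link link_az') W7);
    by rewrite ?mem_slots ?ja_lt6 ?jb_lt6 ?ltn_pmod.
Qed.

Lemma exit_leaves k j : k < 5 -> j < 6 -> is_exit (k, j) -> leaves (k, j).
Proof. by move=> hk hj /(leaves_exit (slotP hk hj)). Qed.

Lemma exits_admissible :
  [&& ex %% 3 \in [:: 1; 2], ey %% 3 \in [:: 1; 2] & eb %% 3 \in [:: 1; 2]].
Proof.
have Lx : leaves (0, ex) by apply: exit_leaves; rewrite // /is_exit /= !eqxx ?orbT.
have Ly : leaves (1, ey) by apply: exit_leaves; rewrite // /is_exit /= !eqxx ?orbT.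
have Lb : leaves (4, eb) by apply: exit_leaves; rewrite // /is_exit /= !eqxx ?orbT.
apply/and3P; split; apply: residue12.
- by apply: (exit_residue _ _ _ _ _ (real_white_link link_xz) (real_white_link link_xz') Lx).
- apply: (exit_residue _ _ _ _ _ (real_white_link link_yz) (real_white_link link_yz') Ly);
    by rewrite ?mem_slots ?jy_lt6 ?ltn_pmod.
- apply: (exit_residue _ _ _ _ _ (real_white_link link_ba) (real_white_link link_ba') Lb);
    by rewrite ?mem_slots ?jb_lt6 ?ltn_pmod.
Qed.

Definition model (d : seq nat) : config :=
  Config jy ja jb (ex %% 3) (ey %% 3) (eb %% 3) (pside (base 0)) d.

Lemma side_link k i k' i' : real_link (k, i) (k', i') ->
  pside (vtx (k', i')) = ~~ pside (vtx (k, i)).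
Proof. by move/real_white_link/white_link_sides; case: (pside _); case: (pside _). Qed.

Lemma model_base_side d k : k < 5 -> base_side (model d) k = pside (base k).
Proof.
move: (side_link link_xz) (side_link link_yz) (side_link link_az) (side_link link_ba).
rewrite /vtx /= !(side_iter HK) /= ?addbF => sz sy sa sb.
case: k => [|[|[|[|[|]]]]] // _; rewrite /base_side /=.
- by rewrite -sz sy negbK.
- by rewrite -sz sa negbK.
- by rewrite -sz sa negbK sb negbK.
Qed.

Lemma model_slot_side d u : u \in slots -> slot_side (model d) u = pside (vtx u).
Proof.
by rewrite mem_slots => /andP [hk _]; rewrite /slot_side model_base_side // /vtx (side_iter HK).
Qed.

(* The real edges, exits and free slots do not depend on the derived edges;
   [M0] is the model with a dummy description of them. *)
Local Notation M0 := (model [::]).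
Local Notation fslot := (free_slot M0).

(* Well-formedness is part of the exhaustive check. *)
Lemma model_well_formed : well_formed M0.
Proof.
case/and3P: exits_admissible => hx hy hb.
have [wf _] := config_certified (pside (base 0)) jy_lt6 ja_lt6 jb_lt6 rotations_admissible
  hx hy hb (d := [:: 1; 0; 3; 2]) erefl isT isT.
exact: wf.
Qed.

Lemma real_edge_link x y : (x, y) \in real_edges M0 -> real_link x y.
Proof.
move: link_xz' link_yz' link_az' link_ba' => ? ? ? ?; rewrite !inE.
by do ![case/orP=> [/eqP [-> ->] //|]]; move/eqP => [-> ->].
Qed.

Lemma exit_slot_exit u : u \in exit_slots M0 -> is_exit u.
Proof.
rewrite /exit_slots /is_exit !inE /=.
by do ![case/orP=> [/eqP -> /=|]]; [..|move/eqP -> => /=]; rewrite ?modnDr ?modn_mod ?eqxx ?orbT.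
Qed.

Lemma exit_exit_slot u : u \in slots -> is_exit u -> u \in exit_slots M0.
Proof.
case: u => k i; rewrite mem_slots /= => /andP [hk hi].
have res3 r : r < 3 -> i %% 3 = r -> (i == r) || (i == r + 3).
  move=> hr Er; have hr6 : r + 3 < 6 by rewrite -[6]/(3 + 3) ltn_add2r.
  have := mod3_cases hi (ltn_trans hr (isT : 3 < 6)) (etrans Er (esym (modn_small hr))).
  by case=> ->; rewrite ?eqxx // modn_small ?eqxx ?orbT.
rewrite /is_exit /exit_slots /= !inE.
by case/or3P => /andP [/eqP -> /eqP /(res3 _ (ltn_pmod _ (isT : 0 < 3)))] /orP [] /eqP ->;
  rewrite ?eqxx ?orbT.
Qed.

Lemma fslot_facts t b : t < 4 ->
  [/\ fslot t b \in free_slots M0, fslot t b \in slots,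
      fslot t b \notin real_slots M0, fslot t b \notin exit_slots M0 &
      pside (vtx (fslot t b)) = b].
Proof.
move=> ht; have hf : fslot t b \in free_slots M0 by apply/free_slotsP; exists t, b.
have hs : fslot t b \in slots.
  by apply: (wf_in_slots model_well_formed); rewrite mem_cat orbC mem_cat hf orbT.
have /andP [hr he] := wf_free_apart model_well_formed hf.
split=> //; rewrite -(model_slot_side [::] hs).
by case: (wf_free_slot model_well_formed ht) => ? /negbTE ? _ _ _; case: b {hf hs hr he}.
Qed.

Lemma fslot_antipodal t : t < 4 -> vtx (fslot t true) = vbar (vtx (fslot t false)).
Proof.
move=> ht; case: (wf_free_slot model_well_formed ht) => _ _ E1 E2 E3.
case: (fslot t true) E1 E3 => k i /= -> ->; case: (fslot t false) E2 => k' i' /= ->.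
by rewrite vbar_vtx.
Qed.

Lemma fslot_inj t t' b b' : t < 4 -> t' < 4 -> fslot t b = fslot t' b' -> t = t'.
Proof. exact: (@wf_free_slot_inj M0 model_well_formed). Qed.

Lemma no_antipodal_link t : t < 4 -> ~ white_link (fslot t false) (fslot t true).
Proof. by move=> ht [e we J]; rewrite fslot_antipodal // in J; apply: no_white_antipodal J. Qed.

Lemma real_slot_link x y : x \in real_slots M0 -> y \in slots -> white_link x y ->
  ((x, y) \in real_edges M0) || ((y, x) \in real_edges M0).
Proof.
case/real_slotsP => [[x1 x2] hp /= Ex] hy W.
have in_slots z : z \in real_slots M0 -> z \in slots.
  by move=> hz; apply: (wf_in_slots model_well_formed); rewrite mem_cat hz.
have [h1 h2] : x1 \in slots /\ x2 \in slots.
  by split; apply: in_slots; apply/real_slotsP; exists (x1, x2); auto.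
have W12 := real_white_link (real_edge_link hp).
case: Ex => Ex; subst x.
  by rewrite -(white_link_fun h1 h2 hy W12 W) hp.
by rewrite -(white_link_fun h2 h1 hy (white_link_sym W12) W) hp orbT.
Qed.

Lemma white_link_ex u : u \in slots -> ~~ is_exit u -> exists2 u', u' \in slots & white_link u u'.
Proof.
move=> hu nx; have [e we /incident_joins [w J]] := white_edge_ex HK (vtx u).
case hw: (w \in VH).
  by have /VH_vtx [u' hu' Ew] := hw; exists u'; last by exists e; rewrite -?Ew.
by case/negP: nx; apply/(leaves_exit hu); exists e => //; exists w; rewrite ?hw.
Qed.

Lemma free_mate t b : t < 4 ->
  exists t', [/\ t' < 4, t' != t & white_link (fslot t b) (fslot t' (~~ b))].
Proof.
move=> ht; have [hf hs hr he hside] := fslot_facts b ht.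
have [u' hu' W] := white_link_ex hs (contra (exit_exit_slot hs) he).
case: (wf_cover model_well_formed hu') => [h'|h'|/free_slotsP [t' [b' [ht' Eu']]]].
- case/negP: hr; apply/real_slotsP.
  case/orP: (real_slot_link h' hs (white_link_sym W)) => hp.
    by exists (u', fslot t b); auto.
  by exists (fslot t b, u'); auto.
- case: (white_link_stays hu' hs (white_link_sym W)).
  exact/(leaves_exit hu')/exit_slot_exit.
subst u'; exists t'; have [_ _ _ _ hside'] := fslot_facts b' ht'.
have Eb : b' = ~~ b.
  by move: (white_link_sides W); rewrite hside hside'; case: (b); case: (b').
subst b'; split=> //; apply/eqP => Et; subst t'.
case: b W {hside hside' hf hs hr he hu'} => W; last exact: no_antipodal_link ht W.
exact: no_antipodal_link ht (white_link_sym W).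
Qed.

(* [mate t] is the pair whose [true] free slot is white-linked to the
   [false] free slot of pair t; this is the derived-edge permutation of H. *)
Definition mate (t : nat) : nat :=
  if [pick s : 'I_4 | [exists e : E, white e &&
        joins e (vtx (fslot t false)) (vtx (fslot s true))]] is Some s then nat_of_ord s else 0.

Lemma mateP t : t < 4 ->
  [/\ mate t < 4, mate t != t & white_link (fslot t false) (fslot (mate t) true)].
Proof.
move=> ht; have [t' [ht' nt' /= W]] := free_mate false ht.
have [_ hf _ _ _] := fslot_facts false ht.
suff -> : mate t = t' by [].
rewrite /mate; case: pickP => [s /existsP [e /andP [we J]]|none].
  have [_ hs _ _ _] := fslot_facts true (ltn_ord s).
  have [_ hs' _ _ _] := fslot_facts true ht'.
  have Ws : white_link (fslot t false) (fslot s true) by exists e.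
  exact: fslot_inj (ltn_ord s) ht' (white_link_fun hf hs hs' Ws W).
case: W => e we J; have := none (Ordinal ht'); rewrite /=.
by move/negbT/existsPn/(_ e); rewrite we J.
Qed.

Lemma mate_inj t t' : t < 4 -> t' < 4 -> mate t = mate t' -> t = t'.
Proof.
move=> ht ht' Em; have [hm _ W] := mateP ht; have [_ _ W'] := mateP ht'.
rewrite -Em in W'.
have [_ hs _ _ _] := fslot_facts true hm.
have [_ hf _ _ _] := fslot_facts false ht; have [_ hf' _ _ _] := fslot_facts false ht'.
exact: fslot_inj ht ht' (white_link_fun hs hf hf' (white_link_sym W) (white_link_sym W')).
Qed.

Local Notation mates := [seq mate t | t <- iota 0 4].

Lemma dmap_mates t : t < 4 -> dmap (model mates) t = mate t.
Proof. by move=> ht; rewrite /dmap (nth_map 0) ?size_iota // nth_iota. Qed.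

Lemma mates_derangement : [/\ size mates = 4, all (gtn 4) mates & derangement mates].
Proof.
have mate_lt t : t \in iota 0 4 -> mate t < 4 by rewrite mem_iota => /mateP [].
split; first by rewrite size_map size_iota.
  by apply/allP => m /mapP [t ht ->]; apply: mate_lt.
apply/andP; split.
  by rewrite map_inj_in_uniq ?iota_uniq // => t t'; rewrite !mem_iota; apply: mate_inj.
apply/allP => t; rewrite mem_iota => ht.
by rewrite -/(dmap (model mates) t) dmap_mates //; case: (mateP ht).
Qed.

Lemma model_certified : exists n, certifies (model mates) (choice_of n).
Proof.
case/and3P: exits_admissible => hx hy hb; case: mates_derangement => sz lt der.
by case: (config_certified (pside (base 0)) jy_lt6 ja_lt6 jb_lt6 rotations_admissible
  hx hy hb sz lt der).
Qed.

Lemma mate_edge t : t < 4 -> (fslot t false, fslot (mate t) true) \in derived_edges (model mates).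
Proof. by move=> ht; apply/mapP; exists t; rewrite ?mem_iota ?dmap_mates. Qed.

Lemma white_link_model u u' : u \in slots -> u' \in slots -> white_link u u' ->
  ((u, u') \in white_edges (model mates)) || ((u', u) \in white_edges (model mates)).
Proof.
move=> hu hu' W; rewrite /white_edges !mem_cat.
case: (wf_cover model_well_formed hu) => [h|h|/free_slotsP [t [b [ht Eu]]]].
- by case/orP: (real_slot_link h hu' W) => ->; rewrite ?orbT.
- by case: (white_link_stays hu hu' W); exact/(leaves_exit hu)/exit_slot_exit.
subst u; have [hm _ Wm] := mateP ht; have [_ hs _ _ _] := fslot_facts true hm.
case: b W hu => W hu; last by rewrite -(white_link_fun hu hs hu' Wm W) mate_edge ?orbT.
have [t' [ht' _ /= W']] := free_mate true ht; have [_ hf' _ _ _] := fslot_facts false ht'.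
rewrite -(white_link_fun hu hf' hu' W' W); have [hm' _ Wm'] := mateP ht'.
have [_ hs' _ _ _] := fslot_facts true hm'.
by rewrite (white_link_fun hf' hu hs' (white_link_sym W') Wm') mate_edge ?orbT.
Qed.

Section Reduction.
Variable choice : nat -> bool.
Hypothesis cert : certifies (model mates) choice.
Local Notation mated := (partner choice).
Local Notation lab := (labelling (model mates) choice).

Definition matching : {set E} :=
  [set e | blue e && [exists k : 'I_5, exists i : 'I_6,
     joins e (vtx (k : nat, i : nat)) (vtx (mated (k : nat, i : nat)))]].

Lemma matchingP e :
  reflect (blue e /\ exists2 u, u \in slots & joins e (vtx u) (vtx (mated u))) (e \in matching).
Proof.
rewrite inE; apply: (iffP andP) => [[be /existsP [k /existsP [i J]]]|[be [[k i] hu J]]].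
  by split=> //; exists (k : nat, i : nat); rewrite ?mem_slots /= ?ltn_ord.
move: hu; rewrite mem_slots /= => /andP [hk hi]; split=> //.
by apply/existsP; exists (Ordinal hk); apply/existsP; exists (Ordinal hi).
Qed.

Lemma mated_slots u : u \in slots -> mated u \in slots.
Proof.
by rewrite !mem_slots => /andP [hk hi]; case: (partner_facts choice hi) => -> -> _ _; rewrite hk.
Qed.

Lemma mated_invol u : u \in slots -> mated (mated u) = u.
Proof. by rewrite mem_slots => /andP [_ hi]; case: (partner_facts choice hi). Qed.

Lemma mated_rot u : u \in slots ->
  vtx (mated u) = rot (vtx u) \/ vtx u = rot (vtx (mated u)).
Proof.
rewrite mem_slots => /andP [_ hi]; case: (partner_facts choice hi) => E1 _ _ [] E2.
  by left; rewrite rot_vtx -E1 -E2; case: (mated u).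
by right; rewrite rot_vtx E1 -E2; case: (u).
Qed.

Lemma matched_edge u : u \in slots -> exists2 e : E, blue e & joins e (vtx u) (vtx (mated u)).
Proof.
case/mated_rot => ->; first exact: blue_edge_ex.
by have [e be J] := blue_edge_ex HK (vtx (mated u)); exists e; rewrite // joinsC.
Qed.

Lemma matched_edge_uniq u (e f : E) : u \in slots -> blue e -> blue f ->
  joins e (vtx u) (vtx (mated u)) -> joins f (vtx u) (vtx (mated u)) -> e = f.
Proof.
case/mated_rot => E1 be bf; rewrite E1.
  by move=> Je Jf; apply: (blue_edge_uniq HK be Je bf Jf).
by rewrite ![joins _ (rot _) _]joinsC => Je Jf; apply: (blue_edge_uniq HK be Je bf Jf).
Qed.

Lemma matching_at e u : e \in matching -> u \in slots -> incident e (vtx u) ->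
  joins e (vtx u) (vtx (mated u)).
Proof.
case/matchingP => _ [w hw J] hu /(joins_incident J) [] /vtx_inj Eu.
  by rewrite (Eu hu hw).
by rewrite (Eu hu (mated_slots hw)) mated_invol // joinsC.
Qed.

Lemma matching_count u : u \in slots -> #|[set e in matching | incident e (vtx u)]| = 1.
Proof.
move=> hu; have [e0 b0 J0] := matched_edge hu.
have m0 : e0 \in matching by apply/matchingP; split=> //; exists u.
apply/eqP/cards1P; exists e0; apply/setP => e; rewrite in_set in_set1.
apply/andP/eqP => [[he /(matching_at he hu) J]|->]; last by rewrite m0 (joins_incl J0).
by case/matchingP: he => be _; apply: matched_edge_uniq J J0.
Qed.

Lemma matching_inside e : e \in matching -> [&& blue e, end1 e \in VH & end2 e \in VH].
Proof.
case/matchingP => be [u hu J]; rewrite be /=.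
by case: (joins_eq J (joins_ends e)) => [[-> ->]|[-> ->]]; rewrite !vtx_VH ?mated_slots.
Qed.

Local Notation S := (contracted_edges VH matching).

Lemma contracted_cases g : g \in S -> g \in matching \/ white g.
Proof. by rewrite /contracted_edges in_setU inE => /orP [|/andP []]; auto. Qed.

Lemma contracted_inside g x : g \in S -> incident g x -> x \notin VH -> white g.
Proof.
case/contracted_cases => // /matching_inside /and3P [_ h1 h2].
by rewrite /incident => /orP [] /eqP <-; rewrite ?h1 ?h2.
Qed.

Lemma contracted_white g : g \in S -> white g -> (end1 g \in VH) || (end2 g \in VH).
Proof.
rewrite /contracted_edges in_setU inE => /orP [/matchingP [bg _]|/andP [_ //]].
by move: bg; rewrite /blue /white; case: (pcol g).
Qed.

Lemma label_edge g u u' : g \in S -> u \in slots -> u' \in slots ->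
  joins g (vtx u) (vtx u') -> lab u = lab u'.
Proof.
case/and3P: cert => /allP white_ok /allP mated_ok _ hg hu hu' J.
case: (contracted_cases hg) => [hm|wg].
  have J' := matching_at hm hu (joins_incl J).
  rewrite (vtx_inj hu' (mated_slots hu) (joins_other HK J' J)).
  exact/eqP/mated_ok.
by case/orP: (white_link_model hu hu' (ex_intro2 _ _ g wg J)) => /white_ok /eqP.
Qed.

Definition vertex_label (v : V) : nat :=
  if [pick ki : 'I_5 * 'I_6 | vtx (ki.1 : nat, ki.2 : nat) == v] is Some ki
  then lab (ki.1 : nat, ki.2 : nat) else 0.

Definition edge_label (g : E) : nat :=
  if end1 g \in VH then vertex_label (end1 g) else vertex_label (end2 g).

(* An edge of a contracted path carries the label of its ends in V(H), and
   consecutive edges have equal labels (outside V(H) they coincide, as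
   white edges form a matching). *)
Lemma vertex_label_vtx u : u \in slots -> vertex_label (vtx u) = lab u.
Proof.
move=> hu; rewrite /vertex_label; case: pickP => [ki /eqP Ev|none].
  by rewrite (vtx_inj _ hu Ev) // mem_slots /= !ltn_ord.
case: u hu none => k i; rewrite mem_slots /= => /andP [hk hi] /(_ (Ordinal hk, Ordinal hi)).
by rewrite eqxx.
Qed.

Lemma edge_label_at g u : g \in S -> u \in slots -> incident g (vtx u) -> edge_label g = lab u.
Proof.
move=> hg hu hi; rewrite /edge_label.
case h1: (end1 g \in VH); last first.
  by case/orP: hi => /eqP Eu; [rewrite Eu vtx_VH in h1 | rewrite Eu vertex_label_vtx].
have /VH_vtx [u1 hu1 E1] := h1; rewrite E1 vertex_label_vtx //.
case/orP: hi => /eqP E2; first by rewrite E2 in E1; rewrite (vtx_inj hu hu1 E1).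
by apply: (label_edge hg hu1 hu); rewrite -E1 -E2 joins_ends.
Qed.

Lemma edge_label_step g1 g2 : g1 \in S -> g2 \in S -> share_vertex g1 g2 ->
  edge_label g1 = edge_label g2.
Proof.
move=> h1 h2 sh.
have [x [i1 i2]] : exists x, incident g1 x /\ incident g2 x.
  by case/orP: sh => h; [exists (end1 g2) | exists (end2 g2)]; rewrite /incident eqxx ?orbT.
case hx: (x \in VH).
  have /VH_vtx [u hu Ex] := hx; subst x.
  by rewrite (edge_label_at h1 hu i1) (edge_label_at h2 hu i2).
have w1 := contracted_inside h1 i1 (negbT hx); have w2 := contracted_inside h2 i2 (negbT hx).
by rewrite (white_edge_uniq HK w1 i1 w2 i2).
Qed.

Lemma edge_label_connect e f :
  connect [rel g1 g2 | [&& g1 \in S, g2 \in S & share_vertex g1 g2]] e f ->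
  edge_label e = edge_label f.
Proof.
case/connectP => p; elim: p e => [|g p IH] e /=; first by move=> _ ->.
by case/andP => /and3P [h1 h2 sh] pth Ef; rewrite (edge_label_step h1 h2 sh); apply: IH.
Qed.

Lemma white_real g x y :
  white g -> joins g (vtx x) (vtx y) -> (x, y) \in real_edges M0 -> real g.
Proof.
move=> wg J /real_edge_link [f rf Jf]; have /and3P [wf _ _] := rf.
by rewrite (white_edge_uniq HK wg (joins_incl J) wf (joins_incl Jf)).
Qed.

Lemma derived_edge_free x y : (x, y) \in derived_edges (model mates) ->
  exists2 t, t < 4 & x = fslot t false.
Proof. by case/mapP => t; rewrite mem_iota => ht [-> _]; exists t. Qed.

Lemma derived_at_free g : g \in S -> derived g ->
  exists2 t, t < 4 & incident g (vtx (fslot t false)).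
Proof.
move=> hg dg; have /andP [wg nr] := dg.
have /andP [/VH_vtx [u hu Eu] /VH_vtx [u' hu' Eu']] :=
  derived_inside dg (contracted_white hg wg).
have J : joins g (vtx u) (vtx u') by rewrite -Eu -Eu' joins_ends.
have W : white_link u u' by exists g.
case/orP: (white_link_model hu hu' W); rewrite mem_cat => /orP [hr|/derived_edge_free [t ht Et]].
- by rewrite (white_real wg J hr) in nr.
- by exists t; rewrite // -Et (joins_incl J).
- by rewrite joinsC in J; rewrite (white_real wg J hr) in nr.
- by exists t; rewrite // -Et (joins_incr J).
Qed.

Lemma label_free_inj t t' : t < 4 -> t' < 4 ->
  lab (fslot t false) = lab (fslot t' false) -> t = t'.
Proof.
case/and3P: cert => _ _ U ht ht' El; apply/eqP.
have := nth_uniq 0 _ _ U; rewrite size_map size_iota => /(_ t t' ht ht') <-.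
by rewrite !(nth_map 0) ?size_iota // !nth_iota // El.
Qed.

(* The matching defines a safe reduction of H: two derived edges on one
   contracted path have the same label, hence share a vertex, hence are equal. *)
Lemma matching_safe : safe_reduction H matching.
Proof.
split; first exact: matching_inside.
split; first by move=> v /VH_vtx [u hu ->]; apply: matching_count.
move=> e f he hf de df /edge_label_connect.
have [t ht ie] := derived_at_free he de; have [t' ht' jf] := derived_at_free hf df.
have [_ hs _ _ _] := fslot_facts false ht; have [_ hs' _ _ _] := fslot_facts false ht'.
rewrite (edge_label_at he hs ie) (edge_label_at hf hs' jf) => /(label_free_inj ht ht') Et.
subst t'; case/andP: de => we _; case/andP: df => wf _.
by apply: (white_edge_uniq HK we ie wf jf).
Qed.

End Reduction.

Theorem transfer_safe : safely_reducible H.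
Proof.
by have [n cn] := model_certified; exists (matching (choice_of n)); apply: matching_safe.
Qed.

End Transfer.

Section Fork.
Variables (K K' : phex) (phi : hexT K' + 'I_5 -> hexT K) (g1 g2 g3 : hexT K').
Hypothesis HK : is_pseudohex K.
Hypothesis PK : proper_pseudohex K.
Hypothesis HF : F_addition phi g1 g2 g3.
Local Notation V := (pV K).
Local Notation E := (pE K).
Local Notation VF := (vset_of (F_K phi)).
Hypothesis no_edges_inside : forall e : E, no_edge VF e -> (end1 e \in VF) && (end2 e \in VF).

Local Notation xF := (@Ordinal 5 0 isT).
Local Notation yF := (@Ordinal 5 1 isT).
Local Notation zF := (@Ordinal 5 2 isT).
Local Notation aF := (@Ordinal 5 3 isT).
Local Notation bF := (@Ordinal 5 4 isT).

Lemma phi_inj : injective phi.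
Proof. by case: HF => /bij_inj. Qed.

Lemma adjE u v : GK_adj (phi u) (phi v) = fork_sum_adj (@GK_adj K') g1 g2 g3 u v.
Proof. by case: HF => _ [_ [_ [_ [_ H]]]]. Qed.

Lemma memVF v : reflect (exists p : 'I_5, v \in val (phi (inr p))) (v \in VF).
Proof.
rewrite /vset_of inE; apply: (iffP existsP) => [[h /andP [/imsetP [p _ ->] hv]]|[p hv]].
  by exists p.
by exists (phi (inr p)); rewrite hv andbT; apply/imsetP; exists p.
Qed.

Lemma outsideP w : reflect (exists g, w \in val (phi (inl g))) (w \notin VF).
Proof.
apply: (iffP idP) => [hw|[g hg]]; last first.
  by apply/memVF => -[p hp]; have := phi_inj (hexT_eq HK hg hp).
have hexw : is_hexagon (hex_of w) by apply/existsP; exists w.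
case: HF => [[psi _ phiK] _]; case Epsi: (psi (exist (@is_hexagon K) _ hexw)) => [g|p].
  by exists g; rewrite -Epsi phiK /= hex_self.
by case/memVF: hw; exists p; rewrite -Epsi phiK /= hex_self.
Qed.

Lemma GK_real_edge (h1 h2 : hexT K) : GK_adj h1 h2 ->
  exists e : E, exists u, exists w, [/\ real e, joins e u w, u \in val h1 & w \in val h2].
Proof.
case/andP => _ /existsP [e /andP [re /orP [] /andP [a b]]].
  by exists e, (end1 e), (end2 e); rewrite joins_ends.
by exists e, (end2 e), (end1 e); rewrite joinsC joins_ends.
Qed.

Lemma real_edge_attach (p : 'I_5) g (e : E) v w : real e -> joins e v w ->
  v \in val (phi (inr p)) -> w \in val (phi (inl g)) -> fork_attach g1 g2 g3 p g.
Proof.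
move=> re J hv hw; suff : GK_adj (phi (inr p)) (phi (inl g)) by rewrite adjE.
apply/andP; split; first by apply/negP => /eqP /phi_inj.
apply/existsP; exists e; rewrite re /=.
by case: (joins_eq J (joins_ends e)) => [[-> ->]|[-> ->]]; rewrite hv hw ?orbT.
Qed.

(* As G^K has no 2-cycle, real edges between two given hexagons are the
   antipodal pair of one of them. *)
Lemma real_edge_pair (e f : E) a b c d : real e -> real f -> joins e a b -> joins f c d ->
  hex_of a = hex_of c -> hex_of b = hex_of d -> hex_of a != hex_of b -> c = a \/ c = vbar a.
Proof.
case: PK => _ [_ no2] re rf Je Jf hac hbd hab.
have key : joins f (end1 e) (end2 e) || joins f (vbar (end1 e)) (vbar (end2 e)).
  apply: (no2 e f re rf).
    by case: (joins_eq Je (joins_ends e)) => [[-> ->]|[-> ->]] //; rewrite eq_sym.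
  case: (joins_eq Je (joins_ends e)) => [[-> ->]|[-> ->]];
  case: (joins_eq Jf (joins_ends f)) => [[-> ->]|[-> ->]];
  by rewrite -hac -hbd !eqxx ?orbT.
have {key} : joins f a b || joins f (vbar a) (vbar b).
  case: (joins_eq Je (joins_ends e)) => [[E1 E2]|[E1 E2]]; rewrite E1 E2 in key => //.
  by rewrite [joins f b a]joinsC [joins f (vbar b) _]joinsC in key.
case/orP => J; [left | right]; case: (joins_eq J Jf) => [[-> _]|[E3 _]] //.
  by move/eqP: hab; rewrite hac E3 hbd.
by move/eqP: hab; rewrite hac E3 (hex_vbar_eq HK) hbd.
Qed.

Lemma fork_link (p q : 'I_5) : fork_adj p q -> exists e : E, exists u, exists w,
  [/\ real e, joins e u w, u \in val (phi (inr p)) & w \in val (phi (inr q))].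
Proof. by move=> pq; apply: GK_real_edge; rewrite adjE. Qed.

Lemma attach_link (p : 'I_5) g : fork_attach g1 g2 g3 p g ->
  exists e : E, exists u, exists w,
    [/\ real e, joins e u w, u \in val (phi (inr p)) & w \in val (phi (inl g))].
Proof. by move=> pg; apply: GK_real_edge; rewrite adjE. Qed.

Lemma ordinal5P (P : 'I_5 -> Prop) :
  P xF -> P yF -> P zF -> P aF -> P bF -> forall p, P p.
Proof.
by move=> ? ? ? ? ? [[|[|[|[|[|//]]]]] hp]; rewrite (bool_irrelevance hp isT).
Qed.

Section Frame.
Variable base : nat -> V.
Hypothesis base_hex : forall p : 'I_5, val (phi (inr p)) = hex_of (base p).

Lemma vtx_fork (p : 'I_5) i : vtx base (p : nat, i) \in val (phi (inr p)).
Proof. by rewrite base_hex hex_iter. Qed.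

Lemma in_fork_hex (p : 'I_5) v :
  v \in val (phi (inr p)) -> exists2 j, j < 6 & v = vtx base (p : nat, j).
Proof. by rewrite base_hex => /hexP. Qed.

Lemma fork_vtx v : v \in VF <-> exists2 u, u \in slots & v = vtx base u.
Proof.
split => [/memVF [p /in_fork_hex [j hj ->]]|[[k i] hu ->]].
  by exists (p : nat, j); rewrite // mem_slots /= ltn_ord.
move: hu; rewrite mem_slots /= => /andP [hk _].
by apply/memVF; exists (Ordinal hk); apply: vtx_fork.
Qed.

Lemma fork_vtx_inj : {in slots &, injective (vtx base)}.
Proof.
move=> [k i] [k' i']; rewrite !mem_slots /= => /andP [hk hi] /andP [hk' hi'] E1.
have a := vtx_fork (Ordinal hk) i; have b := vtx_fork (Ordinal hk') i'.
rewrite E1 in a; have [Ek] := phi_inj (hexT_eq HK a b); subst k'.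
by rewrite (iter_rot_inj HK hi hi' E1).
Qed.

Lemma leaving_real (e : E) v w : white e -> joins e v w -> v \in VF -> w \notin VF -> real e.
Proof.
move=> we J hv hw; apply/negPn/negP => nre.
have : no_edge VF e by rewrite /no_edge /derived we nre (joins_ends_in _ J) hv.
case/no_edges_inside/andP; case: (joins_eq J (joins_ends e)) => [[_ ->]|[-> _]] => h1 h2.
  by rewrite h2 in hw.
by rewrite h1 in hw.
Qed.

Lemma fork_attach_uniq (p : 'I_5) g g' :
  fork_attach g1 g2 g3 p g -> fork_attach g1 g2 g3 p g' -> g' = g.
Proof.
rewrite /fork_attach => /or3P [] /andP [/eqP hp /eqP ->] /or3P [] /andP [/eqP hp' /eqP ->] //;
  by rewrite hp in hp'.
Qed.

Lemma leaving_attach (p : 'I_5) i (e : E) w : white e -> joins e (vtx base (p : nat, i)) w ->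
  w \notin VF -> exists g, [/\ fork_attach g1 g2 g3 p g, real e & w \in val (phi (inl g))].
Proof.
move=> we J hw.
have hv : vtx base (p : nat, i) \in VF by apply/memVF; exists p; apply: vtx_fork.
have re := leaving_real we J hv hw; case/outsideP: hw => g hg.
by exists g; split=> //; apply: real_edge_attach re J (vtx_fork p i) hg.
Qed.

Lemma exit_hexagon (p : 'I_5) g j (e0 : E) o : j < 6 -> fork_attach g1 g2 g3 p g ->
  real e0 -> joins e0 (vtx base (p : nat, j)) o -> o \in val (phi (inl g)) ->
  forall i, i < 6 -> leaves (F_K phi) base (p : nat, i) <-> i %% 3 = j %% 3.
Proof.
move=> hj pg r0 J0 ho i hi; split.
  case=> e we [w J /(leaving_attach we J) [g' [pg' re hw]]].
  rewrite (fork_attach_uniq pg pg') in hw.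
  have hexp k : hex_of (vtx base (p : nat, k)) = val (phi (inr p)).
    by rewrite -(hexT_val HK (vtx_fork p k)).
  have hexo : hex_of o = hex_of w by rewrite -(hexT_val HK ho) -(hexT_val HK hw).
  have apart : hex_of (vtx base (p : nat, j)) != hex_of o.
    by apply/eqP; rewrite hexp -(hexT_val HK ho) => /val_inj /phi_inj.
  case: (real_edge_pair r0 re J0 J (etrans (hexp j) (esym (hexp i))) hexo apart).
    by move/(iter_rot_inj HK hi hj) ->.
  by rewrite (vbar_vtx HK) => /(iter_rot_inj HK hi (ltn_pmod _ (isT : 0 < 6))) ->;
    rewrite modn_dvdm // modnDr.
move/(mod3_cases hi hj) => [] ->.
  exists e0; first by case/and3P: r0.
  by exists o => //; apply/outsideP; exists g.
have [f rf Jf] := real_antipodal HK r0 J0; exists f; first by case/and3P: rf.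
exists (vbar o); first by rewrite -(vbar_vtx HK).
by apply/outsideP; exists g; rewrite (hexT_val HK ho) hex_vbar.
Qed.

(* The hexagons z and a have no attachment, hence no leaving edge. *)
Lemma no_exit_hexagon (p : 'I_5) i :
  (p : nat) \in [:: 2; 3] -> ~ leaves (F_K phi) base (p : nat, i).
Proof.
move=> hp [e we [w J /(leaving_attach we J) [g [pg _ _]]]].
by move: pg hp; rewrite /fork_attach !inE; case: (p : nat) => [|[|[|[|[|]]]]].
Qed.
End Frame.

(* Base vertices: the ends of the real edges xz, yz, az and ba. *)
Lemma fork_frame : exists base : nat -> V, exists jy ja jb,
  [/\ forall p : 'I_5, val (phi (inr p)) = hex_of (base p),
      [/\ jy < 6, ja < 6 & jb < 6] &
      [/\ real_link base (0, 0) (2, 0), real_link base (1, 0) (2, jy),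
          real_link base (3, 0) (2, ja) & real_link base (4, 0) (3, jb)]].
Proof.
have [e1 [u0 [u2 [r1 J1 h0 h2]]]] := @fork_link xF zF isT.
have [e2 [u1 [w1 [r2 J2 h1 hw1]]]] := @fork_link yF zF isT.
have [e3 [u3 [w3 [r3 J3 h3 hw3]]]] := @fork_link aF zF isT.
have [e4 [u4 [w4 [r4 J4 h4 hw4]]]] := @fork_link bF aF isT.
pose base k := nth u0 [:: u0; u1; u2; u3; u4] k.
have base_hex : forall p : 'I_5, val (phi (inr p)) = hex_of (base p).
  by apply: ordinal5P; apply: (hexT_val HK).
have [jy hjy Ey] := in_fork_hex base_hex hw1; have [ja hja Ea] := in_fork_hex base_hex hw3.
have [jb hjb Eb] := in_fork_hex base_hex hw4.
exists base, jy, ja, jb; split=> //; split; first by exists e1.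
- by exists e2; rewrite // -Ey.
- by exists e3; rewrite // -Ea.
- by exists e4; rewrite // -Eb.
Qed.

(* Exits: the slots of x, y and b joined to their attachments. *)
Lemma fork_exits (base : nat -> V) :
  (forall p : 'I_5, val (phi (inr p)) = hex_of (base p)) ->
  exists ex ey eb, [/\ [/\ ex < 6, ey < 6 & eb < 6] &
    forall u, u \in slots -> leaves (F_K phi) base u <-> is_exit ex ey eb u].
Proof.
move=> base_hex.
have attach (p : 'I_5) g : fork_attach g1 g2 g3 p g -> exists j (e : E) o,
    [/\ j < 6, real e, joins e (vtx base (p : nat, j)) o & o \in val (phi (inl g))].
  move=> pg; have [e [u [o [re J hu ho]]]] := attach_link pg.
  by have [j hj Ej] := in_fork_hex base_hex hu; exists j, e, o; rewrite -Ej.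
have [ex [ax [ox [hex rx Jx hox]]]] : exists j (e : E) o, [/\ j < 6, real e,
    joins e (vtx base (0, j)) o & o \in val (phi (inl g1))].
  by apply: (attach xF); rewrite /fork_attach /= eqxx.
have [ey [ay [oy [hey ry Jy hoy]]]] : exists j (e : E) o, [/\ j < 6, real e,
    joins e (vtx base (1, j)) o & o \in val (phi (inl g2))].
  by apply: (attach yF); rewrite /fork_attach /= eqxx.
have [eb [ab [ob [heb rb Jb hob]]]] : exists j (e : E) o, [/\ j < 6, real e,
    joins e (vtx base (4, j)) o & o \in val (phi (inl g3))].
  by apply: (attach bF); rewrite /fork_attach /= eqxx.
exists ex, ey, eb; split=> // -[k i]; rewrite mem_slots /is_exit /= => /andP [hk hi].
case: k hk => [|[|[|[|[|]]]]] // _; rewrite /= ?orbF.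
- apply: iff_trans (rwP eqP).
  by apply: (exit_hexagon base_hex (p := Ordinal (isT : 0 < 5)) hex _ rx Jx hox hi);
    rewrite /fork_attach /= eqxx.
- apply: iff_trans (rwP eqP).
  by apply: (exit_hexagon base_hex (p := Ordinal (isT : 1 < 5)) hey _ ry Jy hoy hi);
    rewrite /fork_attach /= eqxx.
- by split=> // L; case: (no_exit_hexagon base_hex (p := Ordinal (isT : 2 < 5)) isT L).
- by split=> // L; case: (no_exit_hexagon base_hex (p := Ordinal (isT : 3 < 5)) isT L).
- apply: iff_trans (rwP eqP).
  by apply: (exit_hexagon base_hex (p := Ordinal (isT : 4 < 5)) heb _ rb Jb hob hi);
    rewrite /fork_attach /= eqxx.
Qed.
End Fork.

Theorem mainTheorem6 (K K' : phex) (phi : hexT K' + 'I_5 -> hexT K)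
    (g1 g2 g3 : hexT K') :
  is_pseudohex K -> is_pseudohex K' -> proper_pseudohex K -> proper_pseudohex K' ->
  F_addition phi g1 g2 g3 ->
  (forall e : pE K, no_edge (vset_of (F_K phi)) e ->
     (end1 e \in vset_of (F_K phi)) && (end2 e \in vset_of (F_K phi))) ->
  safely_reducible (F_K phi).
Proof.
move=> HK _ PK _ HF inside.
have noend : forall e : pE K, ~ is_end e by case: PK.
have [base [jy [ja [jb [base_hex [hjy hja hjb] [lxz lyz laz lba]]]]]] := fork_frame HK HF.
have [ex [ey [eb [[hex hey heb] exits]]]] := fork_exits HK PK HF inside base_hex.
apply: (transfer_safe HK noend (fork_vtx HK base_hex) (fork_vtx_inj HK HF base_hex)
  hjy hja hjb hex hey heb lxz lyz laz lba exits).
by move=> e de hin; apply: inside; rewrite /no_edge de.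
Qed.
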